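(* In the setting described in the context, define $\Delta_u(\eta,e_1,e_2):=\hat u(\eta,e_1,e_2)-\hat u(\eta,0,0)$. Fix $\delta>0$. For every $R\in(0,\min\{a,b\})$ there exists $C_R>0$ such that $$|\Delta_u(\eta,e_1,e_2)|\le C_R(|e_1|+|e_2|)$$ for all $\eta\in\mathcal T_R:=\{\eta\in\mathbb{R}^2: r(\eta)\le R\}$ and all $e_1,e_2\in\mathbb{R}$ with $|e_1|+|e_2|\le\delta$.
   Context: Let $A>0$. For $i\in\{1,2\}$ let $k_i,\mu_i,g_i:[0,A]\to\mathbb{R}_{\ge0}$ be continuous with positive integrals over $[0,A]$, and let $\zeta_i>0$ solve $\int_0^Ak_i(a)e^{-\int_0^a(\zeta_i+\mu_i(s))ds}da=1$. For continuous nonnegative $k,\mu,g$ and $\zeta\in\mathbb{R}$: $\mathcal G_\kappa(k,\mu,\zeta)=\int_0^A a k(a)e^{-\int_0^a(\zeta+\mu)}da$, $\mathcal G_\gamma(g,\zeta,\mu)=\int_0^A g(a)e^{-\int_0^a(\zeta+\mu)}da$, $\mathcal G_\pi(k,\mu,\zeta)(a)=\int_a^A k(s)e^{\int_s^a(\zeta+\mu(l))dl}ds$. Let $\langle f,h\rangle=\int_0^Afh$, $n_i(a)=e^{-\int_0^a(\zeta_i+\mu_i)}$, $\gamma_1=\mathcal G_\gamma(g_1,\zeta_2,\mu_2)$, $\gamma_2=\mathcal G_\gamma(g_2,\zeta_1,\mu_1)$. Let $\varepsilon>0$, $\beta>\frac{\varepsilon}{4(1+\varepsilon)}$, $x_1^*(0)>\frac{1}{\zeta_2\gamma_2}$,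 $a:=\frac{1}{x_1^*(0)\gamma_2}$, $b:=\zeta_1-\zeta_2+a=\gamma_1x_2^*(0)>0$ (defining $x_2^*(0)>0$). For $e_1,e_2\in\mathbb{R}$: $\hat\zeta_i=\zeta_i-e_i$, $\hat\kappa_i=\mathcal G_\kappa(k_i,\mu_i,\hat\zeta_i)$, $\hat\gamma_1=\mathcal G_\gamma(g_1,\hat\zeta_2,\mu_2)$, $\hat\gamma_2=\mathcal G_\gamma(g_2,\hat\zeta_1,\mu_1)$, $\hat\pi_{0,i}=\mathcal G_\pi(k_i,\mu_i,\hat\zeta_i)$, and $\hat u(\eta,e_1,e_2)=\hat\zeta_2-\frac{1}{x_1^*(0)\hat\gamma_2}+\beta\big[(1+\varepsilon)(\hat\zeta_2-\hat\zeta_1)-\frac{\varepsilon}{x_1^*(0)\hat\gamma_2}-\frac{\hat\kappa_1}{\hat\gamma_2\langle\hat\pi_{0,1},n_1\rangle x_1^*(0)}e^{-\eta_1}+(1+\varepsilon)\frac{\hat\gamma_1\langle\hat\pi_{0,2},n_2\rangle x_2^*(0)}{\hat\kappa_2}e^{\eta_2}\big]$ for $\eta=(\eta_1,\eta_2)\in\mathbb{R}^2$. Also $\phi_1(\eta_1)=a(1-e^{-\eta_1})$, $\phi_2(\eta_2)=b(e^{\eta_2}-1)$, $r(\eta)=\sqrt{\phi_1(\eta_1)^2+\phi_2(\eta_2)^2}$. *)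

From Stdlib Require Import Reals.
From Coquelicot Require Import Coquelicot.
Open Scope R_scope.

Definition cont_on_0A (A : R) (f : R -> R) : Prop :=
  forall x, 0 <= x <= A ->
    filterlim f (within (fun y => 0 <= y <= A) (locally x)) (locally (f x)).

Definition surv (z : R) (mu : R -> R) (a : R) : R :=
  exp (- RInt (fun s => z + mu s) 0 a).

Definition Gkappa (A : R) (k mu : R -> R) (z : R) : R :=
  RInt (fun a => a * k a * surv z mu a) 0 A.

Definition Ggamma (A : R) (g : R -> R) (z : R) (mu : R -> R) : R :=
  RInt (fun a => g a * surv z mu a) 0 A.

Definition Gpi (A : R) (k mu : R -> R) (z : R) (a : R) : R :=
  RInt (fun s => k s * exp (RInt (fun l => z + mu l) s a)) a A.

Definition inner (A : R) (f h : R -> R) : R := RInt (fun x => f x * h x) 0 A.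

(* \hat u(eta, e1, e2); x1 = x_1^*(0), x2 = x_2^*(0) *)
Definition uhat (A : R) (k1 k2 mu1 mu2 g1 g2 : R -> R) (z1 z2 beta eps x1 x2 : R)
    (eta1 eta2 e1 e2 : R) : R :=
  let hz1 := z1 - e1 in
  let hz2 := z2 - e2 in
  let hk1 := Gkappa A k1 mu1 hz1 in
  let hk2 := Gkappa A k2 mu2 hz2 in
  let hg1 := Ggamma A g1 hz2 mu2 in
  let hg2 := Ggamma A g2 hz1 mu1 in
  let hp1 := Gpi A k1 mu1 hz1 in
  let hp2 := Gpi A k2 mu2 hz2 in
  let n1 := surv z1 mu1 in
  let n2 := surv z2 mu2 in
  hz2 - 1 / (x1 * hg2)
  + beta * ((1 + eps) * (hz2 - hz1) - eps / (x1 * hg2)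
            - hk1 / (hg2 * inner A hp1 n1 * x1) * exp (- eta1)
            + (1 + eps) * (hg1 * inner A hp2 n2 * x2) / hk2 * exp eta2).

From Stdlib Require Import Reals Lra Classical.
From Coquelicot Require Import Coquelicot.
Open Scope R_scope.

(* Shifting the growth rate by [e] multiplies the survival [surv z mu a] by [exp (e * a)], and
   the kernel of [Gpi] by [exp (e * (s - a))].  Hence each of the three integrals that enter
   [uhat] (Ggamma, Gkappa and the inner product with Gpi) is a fixed continuous weight
   integrated against [exp (e * h)] with [|h| <= A]: on [|e| <= delta] it is Lipschitz at
   [e = 0] and bounded below by [exp (- delta * A)] times its positive value at [e = 0].
   The quotients occurring in [uhat] are then Lipschitz at [0] as well, and
   [uhat eta e - uhat eta 0] splits into a function of [e1] plus a function of [e2] whose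
   coefficients involve [eta] only through [exp (- eta1)] and [exp eta2].  On [r eta <= R]
   with [R < min a b] both exponentials stay below 2, which makes the constant uniform. *)

Definition lip_at0 (d C : R) (f : R -> R) : Prop :=
  forall e, Rabs e <= d -> Rabs (f e - f 0) <= C * Rabs e.

Section LipschitzAt0.

Variable d : R.

Lemma lip_at0_nonneg C f : 0 < d -> lip_at0 d C f -> 0 <= C.
Proof.
  intros Hd Hf. specialize (Hf d). rewrite (Rabs_pos_eq d) in Hf by lra.
  pose proof (Rabs_pos (f d - f 0)). nra.
Qed.

Lemma lip_at0_le C C' f : C <= C' -> lip_at0 d C f -> lip_at0 d C' f.
Proof. intros HC Hf e He. pose proof (Rabs_pos e). specialize (Hf e He). nra. Qed.

Lemma lip_at0_const c : lip_at0 d 0 (fun _ => c).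
Proof. intros e _. rewrite Rminus_diag, Rabs_R0. lra. Qed.

Lemma lip_at0_id : lip_at0 d 1 (fun e => e).
Proof. intros e _. rewrite Rminus_0_r. lra. Qed.

Lemma lip_at0_plus Cf Cg f g :
  lip_at0 d Cf f -> lip_at0 d Cg g -> lip_at0 d (Cf + Cg) (fun e => f e + g e).
Proof.
  intros Hf Hg e He.
  replace (f e + g e - (f 0 + g 0)) with ((f e - f 0) + (g e - g 0)) by ring.
  eapply Rle_trans; [apply Rabs_triang |].
  specialize (Hf e He); specialize (Hg e He). lra.
Qed.

Lemma lip_at0_scal C c f : lip_at0 d C f -> lip_at0 d (Rabs c * C) (fun e => c * f e).
Proof.
  intros Hf e He. rewrite <- Rmult_minus_distr_l, Rabs_mult, Rmult_assoc.
  apply Rmult_le_compat_l; [apply Rabs_pos | auto].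
Qed.

Lemma lip_at0_mult Cf Cg f g : 0 < d -> lip_at0 d Cf f -> lip_at0 d Cg g ->
  lip_at0 d ((Rabs (f 0) + Cf * d) * Cg + Rabs (g 0) * Cf) (fun e => f e * g e).
Proof.
  intros Hd Hf Hg e He.
  pose proof (lip_at0_nonneg _ _ Hd Hf). pose proof (lip_at0_nonneg _ _ Hd Hg).
  specialize (Hf e He); specialize (Hg e He).
  assert (Hfe : Rabs (f e) <= Rabs (f 0) + Cf * d).
  { replace (f e) with (f 0 + (f e - f 0)) by ring.
    eapply Rle_trans; [apply Rabs_triang |]. nra. }
  replace (f e * g e - f 0 * g 0) with (f e * (g e - g 0) + g 0 * (f e - f 0)) by ring.
  eapply Rle_trans; [apply Rabs_triang |]. rewrite !Rabs_mult.
  pose proof (Rabs_pos e). pose proof (Rabs_pos (f e)). pose proof (Rabs_pos (g 0)).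
  pose proof (Rabs_pos (g e - g 0)).
  assert (Rabs (f e) * Rabs (g e - g 0) <= (Rabs (f 0) + Cf * d) * (Cg * Rabs e))
    by (apply Rmult_le_compat; auto).
  nra.
Qed.

Lemma lip_at0_inv C f m : 0 < m -> lip_at0 d C f ->
  (forall e, Rabs e <= d -> m <= f e) -> lip_at0 d (C / (m * m)) (fun e => / f e).
Proof.
  intros Hm Hf Hlow e He.
  assert (Hf0 : m <= f 0).
  { apply Hlow. rewrite Rabs_R0. apply (Rle_trans _ (Rabs e)); auto using Rabs_pos. }
  specialize (Hlow e He). specialize (Hf e He).
  replace (/ f e - / f 0) with (- (f e - f 0) / (f e * f 0)) by (field; lra).
  rewrite Rabs_div, Rabs_Ropp, (Rabs_pos_eq (f e * f 0)) by nra.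
  apply (Rle_trans _ (C * Rabs e / (m * m))).
  - apply Rmult_le_compat; [apply Rabs_pos | | auto |].
    + apply Rlt_le, Rinv_0_lt_compat; nra.
    + apply Rinv_le_contravar; nra.
  - right. field. lra.
Qed.

Lemma lip_at0_sum_le C1 C2 f g s t : 0 < d -> lip_at0 d C1 f -> lip_at0 d C2 g ->
  Rabs s <= d -> Rabs t <= d ->
  Rabs ((f s - f 0) + (g t - g 0)) <= (C1 + C2) * (Rabs s + Rabs t).
Proof.
  intros Hd Hf Hg Hs Ht.
  pose proof (lip_at0_nonneg _ _ Hd Hf). pose proof (lip_at0_nonneg _ _ Hd Hg).
  pose proof (Rabs_pos s). pose proof (Rabs_pos t).
  specialize (Hf s Hs). specialize (Hg t Ht).
  eapply Rle_trans; [apply Rabs_triang |]. nra.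
Qed.

Definition lip_pos_at0 (f : R -> R) : Prop :=
  (exists C, lip_at0 d C f) /\ exists m, 0 < m /\ forall e, Rabs e <= d -> m <= f e.

Lemma lip_pos_at0_pos0 f : 0 <= d -> lip_pos_at0 f -> 0 < f 0.
Proof.
  intros Hd [_ [m [Hm Hf]]]. apply (Rlt_le_trans _ m); [auto | apply Hf].
  rewrite Rabs_R0. auto.
Qed.

Lemma lip_pos_at0_const c : 0 < c -> lip_pos_at0 (fun _ => c).
Proof.
  intros Hc. split; [exists 0; apply lip_at0_const |].
  exists c. split; [auto | intros; lra].
Qed.

Lemma lip_pos_at0_mult f g :
  0 < d -> lip_pos_at0 f -> lip_pos_at0 g -> lip_pos_at0 (fun e => f e * g e).
Proof.
  intros Hd [[Cf Lf] [mf [Hmf Bf]]] [[Cg Lg] [mg [Hmg Bg]]]. split.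
  - eexists. apply lip_at0_mult; eauto.
  - exists (mf * mg). split; [nra |]. intros e He.
    specialize (Bf e He). specialize (Bg e He). apply Rmult_le_compat; lra.
Qed.

Lemma lip_at0_div f g : 0 < d -> (exists C, lip_at0 d C f) -> lip_pos_at0 g ->
  exists C, lip_at0 d C (fun e => f e / g e).
Proof.
  intros Hd [Cf Lf] [[Cg Lg] [m [Hm Bg]]]. eexists.
  apply (lip_at0_mult Cf (Cg / (m * m)) f (fun e => / g e)); [| | apply lip_at0_inv]; eauto.
Qed.

End LipschitzAt0.

Section ContinuityOn0A.

Variable A : R.

Lemma cont_on_0A_const c : cont_on_0A A (fun _ => c).
Proof. intros x _. apply filterlim_const. Qed.

Lemma cont_on_0A_plus f g :
  cont_on_0A A f -> cont_on_0A A g -> cont_on_0A A (fun x => f x + g x).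
Proof.
  intros Hf Hg x Hx.
  apply (filterlim_comp_2 f g Rplus (Hf x Hx) (Hg x Hx) (filterlim_plus (f x) (g x))).
Qed.

Lemma cont_on_0A_mult f g :
  cont_on_0A A f -> cont_on_0A A g -> cont_on_0A A (fun x => f x * g x).
Proof.
  intros Hf Hg x Hx.
  apply (filterlim_comp_2 f g Rmult (Hf x Hx) (Hg x Hx) (filterlim_mult (f x) (g x))).
Qed.

Lemma cont_on_0A_continuous f : (forall x, continuous f x) -> cont_on_0A A f.
Proof. intros Hf x _. apply (filterlim_filter_le_1 _ (filter_le_within _)), Hf. Qed.

Lemma cont_on_0A_ext f g :
  (forall x, 0 <= x <= A -> f x = g x) -> cont_on_0A A g -> cont_on_0A A f.
Proof.
  intros Hfg Hg x Hx. rewrite Hfg by auto.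
  apply (filterlim_within_ext _ g); [intros; symmetry; auto | auto].
Qed.

Lemma cont_on_0A_comp (h f : R -> R) :
  (forall y, continuous h y) -> cont_on_0A A f -> cont_on_0A A (fun x => h (f x)).
Proof. intros Hh Hf x Hx. exact (filterlim_comp _ _ _ f h _ _ _ (Hf x Hx) (Hh (f x))). Qed.

(* Precomposing with the projection [clamp] onto [[0, A]] turns continuity relative to
   [[0, A]] into continuity on [R], without changing integrals over subintervals. *)
Definition clamp (x : R) : R := Rmin A (Rmax 0 x).

Hypothesis HA : 0 <= A.

Lemma clamp_in x : 0 <= clamp x <= A.
Proof. unfold clamp, Rmin, Rmax; repeat destruct Rle_dec; lra. Qed.

Lemma clamp_id x : 0 <= x <= A -> clamp x = x.
Proof. unfold clamp, Rmin, Rmax; repeat destruct Rle_dec; lra. Qed.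

Lemma continuous_clamp_comp f x : cont_on_0A A f -> continuous (fun y => f (clamp y)) x.
Proof.
  intros Hf. eapply filterlim_comp; [| apply (Hf (clamp x) (clamp_in x))].
  intros P [eps HP]. exists eps. intros y Hy. apply HP; [| apply clamp_in].
  change (Rabs (y - x) < eps) in Hy. change (Rabs (clamp y - clamp x) < eps).
  unfold clamp, Rmin, Rmax in *; repeat destruct Rle_dec; unfold Rabs in *;
    repeat destruct Rcase_abs; lra.
Qed.

Lemma ex_RInt_on_0A f u v : cont_on_0A A f -> 0 <= u <= A -> 0 <= v <= A -> ex_RInt f u v.
Proof.
  intros Hf Hu Hv. apply (ex_RInt_ext (fun y => f (clamp y))).
  - intros x Hx. rewrite clamp_id; [reflexivity |].
    split; [apply (Rle_trans _ (Rmin u v)) | apply (Rle_trans _ (Rmax u v))];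
      try apply Rmin_glb; try apply Rmax_lub; lra.
  - apply (ex_RInt_continuous (V := R_CompleteNormedModule)).
    intros; apply continuous_clamp_comp; auto.
Qed.

Lemma cont_on_0A_RInt f : cont_on_0A A f -> cont_on_0A A (fun x => RInt f 0 x).
Proof.
  intros Hf. apply (cont_on_0A_ext _ (RInt (fun y => f (clamp y)) 0)).
  - intros x Hx. apply RInt_ext. intros y Hy. rewrite Rmin_left, Rmax_right in Hy by lra.
    rewrite clamp_id; [reflexivity | lra].
  - apply cont_on_0A_continuous. intros x.
    apply (continuous_RInt_1 (fun y => f (clamp y)) 0 x), filter_forall. intros y.
    apply (RInt_correct (V := R_CompleteNormedModule)),
      (ex_RInt_continuous (V := R_CompleteNormedModule)).
    intros; apply continuous_clamp_comp; auto.
Qed.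

Lemma cont_on_0A_bounded f : cont_on_0A A f ->
  exists B, forall x, 0 <= x <= A -> Rabs (f x) <= B.
Proof.
  intros Hf.
  destruct (continuity_ab_maj (fun y => Rabs (f (clamp y))) 0 A HA) as [M [HM _]].
  { intros c _. apply continuity_pt_filterlim, (continuous_Rabs_comp (fun y => f (clamp y))).
    apply continuous_clamp_comp; auto. }
  exists (Rabs (f (clamp M))). intros x Hx. rewrite <- (clamp_id x) by auto. apply HM; auto.
Qed.

End ContinuityOn0A.

(* Coquelicot states these for an abstract normed module; specialised to [R] they unify with
   real-valued goals and leave side conditions that [ring] and [field] accept. *)
Lemma RInt_ext_R (f g : R -> R) a b :
  (forall x, Rmin a b < x < Rmax a b -> f x = g x) -> RInt f a b = RInt g a b.
Proof. apply RInt_ext. Qed.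

Lemma RInt_scal_R (f : R -> R) a b c :
  ex_RInt f a b -> RInt (fun x => c * f x) a b = c * RInt f a b.
Proof. apply (RInt_scal f). Qed.

Lemma continuous_R_of_ex_derive (f : R -> R) x : ex_derive f x -> continuous f x.
Proof. apply (ex_derive_continuous (K := R_AbsRing) (V := R_NormedModule)). Qed.

Lemma RInt_gt_0_of_point A f c : 0 < A -> cont_on_0A A f ->
  (forall x, 0 <= x <= A -> 0 <= f x) -> 0 <= c <= A -> 0 < f c -> 0 < RInt f 0 A.
Proof.
  intros HA Hf Hf0 Hc Hfc.
  assert (Hhalf : 0 < f c / 2) by lra.
  destruct (Hf c Hc (fun y => ball (f c) (mkposreal _ Hhalf) y) (locally_ball _ _))
    as [rho Hrho].
  pose proof (cond_pos rho).
  set (u := Rmax 0 (c - rho / 2)). set (v := Rmin A (c + rho / 2)).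
  assert (Hu : 0 <= u <= c) by (unfold u, Rmax; destruct Rle_dec; lra).
  assert (Hv : c <= v <= A) by (unfold v, Rmin; destruct Rle_dec; lra).
  assert (Huv : u < v) by (unfold u, v, Rmax, Rmin; repeat destruct Rle_dec; lra).
  assert (Hex : forall s t, 0 <= s <= A -> 0 <= t <= A -> ex_RInt f s t)
    by (intros; apply (ex_RInt_on_0A A); auto; lra).
  assert (Hsplit : RInt f 0 A = RInt f 0 u + (RInt f u v + RInt f v A)).
  { rewrite <- (RInt_Chasles f 0 u A), <- (RInt_Chasles f u v A); try apply Hex; try lra.
    reflexivity. }
  assert (Hmid : (v - u) * (f c / 2) <= RInt f u v).
  { apply (Rle_trans _ (RInt (fun _ => f c / 2) u v));
      [right; symmetry; exact (RInt_const u v (f c / 2)) |].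
    apply RInt_le; [lra | apply ex_RInt_const | apply Hex; lra |].
    intros x Hx. assert (Hb : ball c rho x).
    { change (Rabs (x - c) < rho). unfold u, v, Rmax, Rmin in Hx.
      repeat destruct Rle_dec; unfold Rabs; destruct Rcase_abs; lra. }
    specialize (Hrho x Hb ltac:(lra)). change (Rabs (f x - f c) < f c / 2) in Hrho.
    unfold Rabs in Hrho; destruct Rcase_abs; lra. }
  assert (0 <= RInt f 0 u) by (apply RInt_ge_0; [lra | apply Hex; lra | intros; apply Hf0; lra]).
  assert (0 <= RInt f v A) by (apply RInt_ge_0; [lra | apply Hex; lra | intros; apply Hf0; lra]).
  nra.
Qed.

Lemma exists_pos_of_RInt_pos f u v : u <= v -> ex_RInt f u v -> 0 < RInt f u v ->
  exists c, u < c < v /\ 0 < f c.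
Proof.
  intros Huv Hf HI. apply NNPP. intros Hn.
  assert (Hle : RInt f u v <= RInt (fun _ => 0) u v).
  { apply RInt_le; [auto | auto | apply ex_RInt_const |].
    intros x Hx. apply Rnot_lt_le. intros Hfx. apply Hn. eauto. }
  rewrite (RInt_const u v 0) in Hle. change (RInt f u v <= (v - u) * 0) in Hle. lra.
Qed.

Lemma exp_le_compat x y : x <= y -> exp x <= exp y.
Proof. intros [Hxy | ->]; [left; apply exp_increasing | right]; auto. Qed.

Lemma abs_exp_sub_1_le x : Rabs (exp x - 1) <= Rabs x * exp (Rabs x).
Proof.
  pose proof (exp_ineq1_le x). pose proof (exp_ineq1_le (- x)).
  assert (E : exp x * exp (- x) = 1) by (rewrite <- exp_plus, Rplus_opp_r; apply exp_0).
  pose proof (exp_pos x).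
  unfold Rabs; repeat destruct Rcase_abs; rewrite ?Ropp_involutive; nra.
Qed.

Lemma RInt_exp_weight_lip (w h : R -> R) u v d B H :
  u <= v -> (forall e, ex_RInt (fun x => w x * exp (e * h x)) u v) ->
  (forall x, u <= x <= v -> Rabs (w x) <= B /\ Rabs (h x) <= H) ->
  lip_at0 d ((v - u) * (B * H * exp (d * H)))
    (fun e => RInt (fun x => w x * exp (e * h x)) u v).
Proof.
  intros Huv Hex Hbd e He.
  rewrite <- (RInt_minus (fun x => w x * exp (e * h x)) (fun x => w x * exp (0 * h x)))
    by auto.
  rewrite Rmult_assoc. apply abs_RInt_le_const;
    [auto | apply (ex_RInt_minus (fun x => w x * exp (e * h x))); auto |].
  intros x Hx. destruct (Hbd x Hx) as [Hwx Hhx].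
  change (Rabs (w x * exp (e * h x) - w x * exp (0 * h x)) <= B * H * exp (d * H) * Rabs e).
  rewrite Rmult_0_l, exp_0, Rmult_1_r.
  replace (w x * exp (e * h x) - w x) with (w x * (exp (e * h x) - 1)) by ring.
  rewrite Rabs_mult.
  pose proof (Rabs_pos e) as He0. pose proof (Rabs_pos (h x)) as Hh0.
  assert (Hexp : Rabs (exp (e * h x) - 1) <= Rabs e * H * exp (d * H)).
  { eapply Rle_trans; [apply abs_exp_sub_1_le |]. rewrite Rabs_mult.
    apply Rmult_le_compat; [nra | apply Rlt_le, exp_pos | apply Rmult_le_compat_l; auto |].
    apply exp_le_compat, Rmult_le_compat; auto. }
  apply (Rle_trans _ (B * (Rabs e * H * exp (d * H)))).
  - apply Rmult_le_compat; auto using Rabs_pos.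
  - right; ring.
Qed.

Lemma RInt_exp_weight_ge (w h : R -> R) u v d H e :
  u <= v -> (forall e, ex_RInt (fun x => w x * exp (e * h x)) u v) ->
  (forall x, u <= x <= v -> 0 <= w x /\ Rabs (h x) <= H) -> Rabs e <= d ->
  exp (- (d * H)) * RInt (fun x => w x * exp (0 * h x)) u v
    <= RInt (fun x => w x * exp (e * h x)) u v.
Proof.
  intros Huv Hex Hbd He.
  rewrite <- RInt_scal_R by auto.
  apply RInt_le; [auto | apply (ex_RInt_scal (fun x => w x * exp (0 * h x))); auto | auto |].
  intros x Hx.
  destruct (Hbd x (conj (Rlt_le _ _ (proj1 Hx)) (Rlt_le _ _ (proj2 Hx)))) as [Hwx Hhx].
  assert (Heh : exp (- (d * H)) <= exp (e * h x)).
  { apply exp_le_compat. pose proof (Rabs_pos e). pose proof (Rabs_pos (h x)).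
    assert (Habs : Rabs (e * h x) <= d * H)
      by (rewrite Rabs_mult; apply Rmult_le_compat; auto).
    apply Rabs_le_between in Habs. lra. }
  change (exp (- (d * H)) * (w x * exp (0 * h x)) <= w x * exp (e * h x)).
  rewrite Rmult_0_l, exp_0, Rmult_1_r, Rmult_comm. apply Rmult_le_compat_l; auto.
Qed.

Lemma cont_on_0A_surv A mu z : 0 < A -> cont_on_0A A mu -> cont_on_0A A (surv z mu).
Proof.
  intros HA Hmu. unfold surv. apply (cont_on_0A_comp A (fun y => exp (- y))).
  - intros y. apply continuous_R_of_ex_derive. auto_derive. auto.
  - apply cont_on_0A_RInt; [lra |]. apply cont_on_0A_plus; [apply cont_on_0A_const | auto].
Qed.

Lemma cont_on_0A_opp A f : cont_on_0A A f -> cont_on_0A A (fun x => - f x).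
Proof.
  apply (cont_on_0A_comp A Ropp). intros y. apply continuous_R_of_ex_derive. auto_derive. auto.
Qed.

Ltac solve_cont_on_0A :=
  repeat match goal with
  | |- cont_on_0A _ (fun _ => ?c) => apply cont_on_0A_const
  | |- cont_on_0A _ (fun x => - @?f x) => apply (cont_on_0A_opp _ f)
  | |- cont_on_0A _ (fun x => RInt _ 0 x) => apply cont_on_0A_RInt; [lra |]
  | |- cont_on_0A _ (fun x => @?f x * @?g x) => apply (cont_on_0A_mult _ f g)
  | |- cont_on_0A _ (fun x => @?f x + @?g x) => apply (cont_on_0A_plus _ f g)
  | |- cont_on_0A _ (surv _ _) => apply cont_on_0A_surv; [lra | assumption]
  | |- cont_on_0A _ (fun x => surv _ _ x) => apply cont_on_0A_surv; [lra | assumption]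
  | |- cont_on_0A _ _ => first
      [ assumption
      | solve [ apply cont_on_0A_continuous; intros;
                apply continuous_R_of_ex_derive; auto_derive; auto ] ]
  end.

Lemma surv_pos z mu a : 0 < surv z mu a.
Proof. apply exp_pos. Qed.

Section Survival.

Variables (A : R) (mu : R -> R) (z : R).
Hypotheses (HA : 0 < A) (Hmu : cont_on_0A A mu).

Lemma ex_RInt_rate s a : 0 <= s <= A -> 0 <= a <= A -> ex_RInt (fun l => z + mu l) s a.
Proof. intros. apply (ex_RInt_on_0A A); [lra | solve_cont_on_0A | auto | auto]. Qed.

Lemma RInt_shifted_rate e s a : 0 <= s <= A -> 0 <= a <= A ->
  RInt (fun l => z - e + mu l) s a = RInt (fun l => z + mu l) s a - e * (a - s).
Proof.
  intros Hs Ha.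
  rewrite (RInt_ext_R (fun l => z - e + mu l) (fun l => (z + mu l) - e)) by (intros; ring).
  rewrite (RInt_minus (fun l => z + mu l) (fun _ => e))
    by (apply ex_RInt_rate || apply ex_RInt_const; auto).
  rewrite (RInt_const s a e).
  change (RInt (fun l => z + mu l) s a - (a - s) * e
          = RInt (fun l => z + mu l) s a - e * (a - s)).
  ring.
Qed.

Lemma surv_shift e a : 0 <= a <= A -> surv (z - e) mu a = surv z mu a * exp (e * a).
Proof.
  intros Ha. unfold surv. rewrite RInt_shifted_rate, <- exp_plus by lra. f_equal. ring.
Qed.

Lemma exp_RInt_shifted_rate e s a : 0 <= s <= A -> 0 <= a <= A ->
  exp (RInt (fun l => z - e + mu l) s a) * surv z mu a = surv z mu s * exp (e * (s - a)).
Proof.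
  intros Hs Ha.
  assert (Hsplit : RInt (fun l => z + mu l) 0 a
                   = RInt (fun l => z + mu l) 0 s + RInt (fun l => z + mu l) s a).
  { symmetry. apply (RInt_Chasles (fun l => z + mu l)); apply ex_RInt_rate; lra. }
  unfold surv. rewrite RInt_shifted_rate, Hsplit, <- !exp_plus by lra. f_equal. ring.
Qed.

Lemma weighted_surv_shift_eq c e :
  RInt (fun a => c a * surv (z - e) mu a) 0 A
  = RInt (fun a => c a * surv z mu a * exp (e * a)) 0 A.
Proof.
  apply RInt_ext_R. intros x Hx. rewrite Rmin_left, Rmax_right in Hx by lra.
  rewrite surv_shift by lra. ring.
Qed.

Lemma weighted_surv_shift_lip c d : cont_on_0A A c ->
  exists C, lip_at0 d C (fun e => RInt (fun a => c a * surv (z - e) mu a) 0 A).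
Proof.
  intros Hc.
  destruct (cont_on_0A_bounded A (Rlt_le _ _ HA) (fun a => c a * surv z mu a)) as [B HB];
    [solve_cont_on_0A |].
  eexists. intros e He. rewrite !weighted_surv_shift_eq.
  apply (RInt_exp_weight_lip (fun a => c a * surv z mu a) (fun a => a) 0 A d B A);
    [lra | | | auto].
  - intros e'. apply (ex_RInt_on_0A A); [lra | solve_cont_on_0A | lra | lra].
  - intros x Hx. split; [auto | rewrite Rabs_pos_eq; lra].
Qed.

Lemma weighted_surv_shift_lower c d : cont_on_0A A c ->
  (forall x, 0 <= x <= A -> 0 <= c x) -> 0 < RInt c 0 A ->
  exists m, 0 < m /\
    forall e, Rabs e <= d -> m <= RInt (fun a => c a * surv (z - e) mu a) 0 A.
Proof.
  intros Hc Hc0 HI.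
  destruct (exists_pos_of_RInt_pos c 0 A) as [x0 [Hx0 Hcx0]];
    [lra | apply (ex_RInt_on_0A A); auto; lra | auto |].
  set (w := fun a => c a * surv z mu a).
  assert (Hw0 : forall x, 0 <= x <= A -> 0 <= w x).
  { intros x Hx. apply Rmult_le_pos; [auto | apply Rlt_le, surv_pos]. }
  exists (exp (- (d * A)) * RInt (fun a => w a * exp (0 * a)) 0 A). split.
  - apply Rmult_lt_0_compat; [apply exp_pos |].
    apply (RInt_gt_0_of_point A _ x0); [lra | unfold w; solve_cont_on_0A | | lra |].
    + intros x Hx. apply Rmult_le_pos; [auto | apply Rlt_le, exp_pos].
    + unfold w. repeat apply Rmult_lt_0_compat; auto using surv_pos, exp_pos.
  - intros e He. rewrite weighted_surv_shift_eq.
    apply (RInt_exp_weight_ge w (fun a => a)); [lra | | | auto].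
    + intros e'. apply (ex_RInt_on_0A A); [lra | unfold w; solve_cont_on_0A | lra | lra].
    + intros x Hx. split; [auto | rewrite Rabs_pos_eq; lra].
Qed.

Lemma Gpi_shift_surv k e a : cont_on_0A A k -> 0 <= a <= A ->
  Gpi A k mu (z - e) a * surv z mu a
  = RInt (fun s => k s * surv z mu s * exp (e * (s - a))) a A.
Proof.
  intros Hk Ha. unfold Gpi. pose proof (surv_pos z mu a).
  rewrite (RInt_ext_R _ (fun s => / surv z mu a * (k s * surv z mu s * exp (e * (s - a))))).
  - rewrite RInt_scal_R; [field; lra |].
    apply (ex_RInt_on_0A A); [lra | solve_cont_on_0A | lra | lra].
  - intros s Hs. rewrite Rmin_left, Rmax_right in Hs by lra.
    rewrite Rmult_assoc, <- (exp_RInt_shifted_rate e s a) by lra. field. lra.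
Qed.

Lemma cont_on_0A_exp_tail w e : cont_on_0A A w ->
  cont_on_0A A (fun a => RInt (fun s => w s * exp (e * (s - a))) a A).
Proof.
  intros Hw. set (W := fun s => w s * exp (e * s)).
  assert (HW : cont_on_0A A W) by (unfold W; solve_cont_on_0A).
  apply (cont_on_0A_ext A _ (fun a => exp (- (e * a)) * (RInt W 0 A + - RInt W 0 a)));
    [| solve_cont_on_0A].
  intros a Ha.
  rewrite <- (RInt_Chasles W 0 a A) by (apply (ex_RInt_on_0A A); auto; lra).
  change (RInt (fun s => w s * exp (e * (s - a))) a A
          = exp (- (e * a)) * (RInt W 0 a + RInt W a A + - RInt W 0 a)).
  rewrite Rplus_comm, <- Rplus_assoc, Rplus_opp_l, Rplus_0_l.
  rewrite <- (RInt_scal_R W) by (apply (ex_RInt_on_0A A); auto; lra).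
  apply RInt_ext_R. intros s _. unfold W.
  replace (e * (s - a)) with (- (e * a) + e * s) by ring. rewrite exp_plus. ring.
Qed.

Section Inner.

Variable k : R -> R.
Hypothesis Hk : cont_on_0A A k.

Let w s := k s * surv z mu s.
Let J e a := RInt (fun s => w s * exp (e * (s - a))) a A.

Lemma inner_Gpi_shift_eq e : inner A (Gpi A k mu (z - e)) (surv z mu) = RInt (J e) 0 A.
Proof.
  unfold inner. apply RInt_ext_R. intros a Ha. rewrite Rmin_left, Rmax_right in Ha by lra.
  apply Gpi_shift_surv; auto; lra.
Qed.

Lemma ex_RInt_tail e : ex_RInt (J e) 0 A.
Proof.
  apply (ex_RInt_on_0A A); [lra | | lra | lra].
  apply cont_on_0A_exp_tail. unfold w. solve_cont_on_0A.
Qed.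

Lemma ex_RInt_weight_tail e a : 0 <= a <= A ->
  ex_RInt (fun s => w s * exp (e * (s - a))) a A.
Proof. intros Ha. apply (ex_RInt_on_0A A); [lra | unfold w; solve_cont_on_0A | lra | lra]. Qed.

Lemma inner_Gpi_shift_lip d :
  exists C, lip_at0 d C (fun e => inner A (Gpi A k mu (z - e)) (surv z mu)).
Proof.
  destruct (cont_on_0A_bounded A (Rlt_le _ _ HA) w) as [B HB]; [unfold w; solve_cont_on_0A |].
  assert (HB0 : 0 <= B) by (apply (Rle_trans _ (Rabs (w 0))); [apply Rabs_pos | apply HB; lra]).
  exists ((A - 0) * (A * (B * A * exp (d * A)))). intros e He.
  rewrite !inner_Gpi_shift_eq, <- (RInt_minus (J e) (J 0)) by apply ex_RInt_tail.
  rewrite Rmult_assoc.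
  apply abs_RInt_le_const; [lra | apply (ex_RInt_minus (J e)); apply ex_RInt_tail |].
  intros a Ha.
  assert (Hlip := RInt_exp_weight_lip w (fun s => s - a) a A d B A ltac:(lra)
                    (fun e' => ex_RInt_weight_tail e' a Ha)).
  eapply Rle_trans; [apply Hlip; auto |].
  - intros s Hs. split; [apply HB; lra | rewrite Rabs_pos_eq; lra].
  - apply Rmult_le_compat_r; [apply Rabs_pos |]. apply Rmult_le_compat_r; [| lra].
    pose proof (exp_pos (d * A)). apply Rmult_le_pos; nra.
Qed.

Lemma inner_Gpi_shift_lower d : (forall x, 0 <= x <= A -> 0 <= k x) ->
  0 < RInt (fun a => k a * surv z mu a) 0 A ->
  exists m, 0 < m /\
    forall e, Rabs e <= d -> m <= inner A (Gpi A k mu (z - e)) (surv z mu).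
Proof.
  intros Hk0 HI.
  assert (Hw0 : forall s, 0 <= s <= A -> 0 <= w s).
  { intros s Hs. apply Rmult_le_pos; [auto | apply Rlt_le, surv_pos]. }
  exists (exp (- (d * A)) * RInt (J 0) 0 A). split.
  - apply Rmult_lt_0_compat; [apply exp_pos |].
    apply (RInt_gt_0_of_point A _ 0); [lra | | | lra |].
    + apply cont_on_0A_exp_tail. unfold w. solve_cont_on_0A.
    + intros a Ha. apply RInt_ge_0; [lra | apply ex_RInt_weight_tail; auto |].
      intros s Hs. apply Rmult_le_pos; [apply Hw0; lra | apply Rlt_le, exp_pos].
    + unfold J. rewrite (RInt_ext_R _ w); [exact HI |].
      intros s _. rewrite Rmult_0_l, exp_0. ring.
  - intros e He. rewrite inner_Gpi_shift_eq, <- RInt_scal_R by apply ex_RInt_tail.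
    apply RInt_le; [lra | apply (ex_RInt_scal (J 0)), ex_RInt_tail | apply ex_RInt_tail |].
    intros a Ha. apply (RInt_exp_weight_ge w (fun s => s - a)); [lra | | | auto].
    + intros e'. apply ex_RInt_weight_tail. lra.
    + intros s Hs. split; [apply Hw0; lra | rewrite Rabs_pos_eq; lra].
Qed.

End Inner.

End Survival.

Lemma RInt_mult_id_pos A k : 0 < A -> cont_on_0A A k ->
  (forall x, 0 <= x <= A -> 0 <= k x) -> 0 < RInt k 0 A -> 0 < RInt (fun a => a * k a) 0 A.
Proof.
  intros HA Hk Hk0 HI.
  destruct (exists_pos_of_RInt_pos k 0 A) as [x0 [Hx0 Hkx0]];
    [lra | apply (ex_RInt_on_0A A); auto; lra | auto |].
  apply (RInt_gt_0_of_point A _ x0); [lra | solve_cont_on_0A | | lra | nra].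
  intros x Hx. pose proof (Hk0 x Hx). nra.
Qed.

Lemma species_rate_maps A k mu g z d : 0 < A ->
  cont_on_0A A k -> cont_on_0A A mu -> cont_on_0A A g ->
  (forall x, 0 <= x <= A -> 0 <= k x /\ 0 <= g x) ->
  0 < RInt k 0 A -> 0 < RInt g 0 A -> 0 < RInt (fun a => k a * surv z mu a) 0 A ->
  lip_pos_at0 d (fun e => Ggamma A g (z - e) mu)
  /\ lip_pos_at0 d (fun e => Gkappa A k mu (z - e))
  /\ lip_pos_at0 d (fun e => inner A (Gpi A k mu (z - e)) (surv z mu)).
Proof.
  intros HA Hk Hmu Hg Hnn Ik Ig In.
  assert (Hk0 : forall x, 0 <= x <= A -> 0 <= k x) by apply Hnn.
  assert (Hg0 : forall x, 0 <= x <= A -> 0 <= g x) by apply Hnn.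
  split; [| split]; split.
  - apply weighted_surv_shift_lip; auto.
  - apply weighted_surv_shift_lower; auto.
  - apply (weighted_surv_shift_lip A mu z HA Hmu (fun a => a * k a)). solve_cont_on_0A.
  - apply (weighted_surv_shift_lower A mu z HA Hmu (fun a => a * k a));
      [solve_cont_on_0A | intros x Hx; pose proof (Hk0 x Hx); nra | apply RInt_mult_id_pos; auto].
  - apply inner_Gpi_shift_lip; auto.
  - apply inner_Gpi_shift_lower; auto.
Qed.

Lemma Rabs_le_sqrt_sum_sq X Y : Rabs X <= sqrt (X ^ 2 + Y ^ 2).
Proof. rewrite <- sqrt_Rsqr_abs. apply sqrt_le_1_alt. unfold Rsqr. nra. Qed.

Lemma lt_2_of_abs_scaled_lt c t : Rabs (c * (t - 1)) < c -> t < 2.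
Proof.
  intros H. rewrite Rabs_mult in H. pose proof (Rabs_pos c). pose proof (Rabs_pos (t - 1)).
  assert (Hc : 0 < c) by nra.
  destruct (Rlt_or_le t 2) as [Ht | Ht]; [auto |].
  rewrite Rabs_pos_eq, (Rabs_pos_eq (t - 1)) in H by lra. nra.
Qed.

Lemma exp_lt_2_of_r_lt a b eta1 eta2 :
  sqrt ((a * (1 - exp (- eta1))) ^ 2 + (b * (exp eta2 - 1)) ^ 2) < Rmin a b ->
  exp (- eta1) < 2 /\ exp eta2 < 2.
Proof.
  intros Hr. pose proof (Rmin_l a b). pose proof (Rmin_r a b). split.
  - apply (lt_2_of_abs_scaled_lt a).
    rewrite <- Rabs_Ropp.
    replace (- (a * (exp (- eta1) - 1))) with (a * (1 - exp (- eta1))) by ring.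
    pose proof (Rabs_le_sqrt_sum_sq (a * (1 - exp (- eta1))) (b * (exp eta2 - 1))). lra.
  - apply (lt_2_of_abs_scaled_lt b).
    pose proof (Rabs_le_sqrt_sum_sq (b * (exp eta2 - 1)) (a * (1 - exp (- eta1)))).
    rewrite Rplus_comm in Hr. lra.
Qed.

Lemma delta_u_split_bound (p q1 q2 : R -> R) d beta eps : 0 < d ->
  (exists C, lip_at0 d C p) -> (exists C, lip_at0 d C q1) -> (exists C, lip_at0 d C q2) ->
  exists C, 0 < C /\ forall E1 E2 e1 e2,
    0 < E1 < 2 -> 0 < E2 < 2 -> Rabs e1 <= d -> Rabs e2 <= d ->
    Rabs (- e2 - (p e1 - p 0) + beta * ((1 + eps) * (e1 - e2) - eps * (p e1 - p 0)
          - E1 * (q1 e1 - q1 0) + (1 + eps) * E2 * (q2 e2 - q2 0)))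
    <= C * (Rabs e1 + Rabs e2).
Proof.
  intros Hd [Cp Lp] [Cq1 Lq1] [Cq2 Lq2].
  pose proof (lip_at0_nonneg _ _ _ Hd Lp). pose proof (lip_at0_nonneg _ _ _ Hd Lq1).
  pose proof (lip_at0_nonneg _ _ _ Hd Lq2).
  set (C1 := Rabs (1 + beta * eps) * Cp + Rabs (beta * (1 + eps)) + 2 * Rabs beta * Cq1).
  set (C2 := Rabs (1 + beta * (1 + eps)) + 2 * Rabs (beta * (1 + eps)) * Cq2).
  assert (HC1 : 0 <= C1).
  { pose proof (Rabs_pos (1 + beta * eps)). pose proof (Rabs_pos (beta * (1 + eps))).
    pose proof (Rabs_pos beta). unfold C1. nra. }
  assert (HC2 : 0 <= C2).
  { pose proof (Rabs_pos (1 + beta * (1 + eps))). pose proof (Rabs_pos (beta * (1 + eps))).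
    unfold C2. nra. }
  exists (1 + C1 + C2). split; [lra |].
  intros E1 E2 e1 e2 HE1 HE2 He1 He2.
  set (F1 := fun s => - (1 + beta * eps) * p s + beta * (1 + eps) * s + - (beta * E1) * q1 s).
  set (F2 := fun t => - (1 + beta * (1 + eps)) * t + beta * (1 + eps) * E2 * q2 t).
  assert (LF1 : lip_at0 d C1 F1).
  { eapply lip_at0_le;
      [| apply lip_at0_plus; [apply lip_at0_plus |]; apply lip_at0_scal; eauto using lip_at0_id].
    unfold C1. rewrite !Rabs_Ropp, (Rabs_mult beta E1), (Rabs_pos_eq E1) by lra.
    pose proof (Rmult_le_pos _ _ (Rabs_pos beta) (lip_at0_nonneg _ _ _ Hd Lq1)). nra. }
  assert (LF2 : lip_at0 d C2 F2).
  { eapply lip_at0_le; [| apply lip_at0_plus; apply lip_at0_scal; eauto using lip_at0_id].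
    unfold C2.
    rewrite !Rabs_Ropp, (Rabs_mult (beta * (1 + eps)) E2), (Rabs_pos_eq E2) by lra.
    pose proof (Rmult_le_pos _ _ (Rabs_pos (beta * (1 + eps))) (lip_at0_nonneg _ _ _ Hd Lq2)).
    nra. }
  replace (- e2 - (p e1 - p 0) + beta * ((1 + eps) * (e1 - e2) - eps * (p e1 - p 0)
           - E1 * (q1 e1 - q1 0) + (1 + eps) * E2 * (q2 e2 - q2 0)))
    with ((F1 e1 - F1 0) + (F2 e2 - F2 0)) by (unfold F1, F2; ring).
  pose proof (Rabs_pos e1). pose proof (Rabs_pos e2).
  eapply Rle_trans; [apply (lip_at0_sum_le d C1 C2); auto |].
  apply Rmult_le_compat_r; lra.
Qed.

(* [u_pert] is [uhat] with the six [e]-dependent integrals abstracted into the maps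
   [G1 G2 K1 K2 I1 I2] and with [E1 E2] standing for [exp (- eta1)], [exp eta2]. *)
Definition u_pert (G1 G2 K1 K2 I1 I2 : R -> R) (z1 z2 beta eps x1 x2 E1 E2 e1 e2 : R) : R :=
  (z2 - e2) - 1 / (x1 * G2 e1)
  + beta * ((1 + eps) * ((z2 - e2) - (z1 - e1)) - eps / (x1 * G2 e1)
            - K1 e1 / (G2 e1 * I1 e1 * x1) * E1
            + (1 + eps) * (G1 e2 * I2 e2 * x2) / K2 e2 * E2).

Lemma u_pert_delta_bound (G1 G2 K1 K2 I1 I2 : R -> R) z1 z2 beta eps x1 x2 d :
  0 < d -> 0 < x1 ->
  lip_pos_at0 d G1 -> lip_pos_at0 d G2 -> lip_pos_at0 d K1 -> lip_pos_at0 d K2 ->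
  lip_pos_at0 d I1 -> lip_pos_at0 d I2 ->
  exists C, 0 < C /\ forall E1 E2 e1 e2,
    0 < E1 < 2 -> 0 < E2 < 2 -> Rabs e1 <= d -> Rabs e2 <= d ->
    Rabs (u_pert G1 G2 K1 K2 I1 I2 z1 z2 beta eps x1 x2 E1 E2 e1 e2
          - u_pert G1 G2 K1 K2 I1 I2 z1 z2 beta eps x1 x2 E1 E2 0 0)
    <= C * (Rabs e1 + Rabs e2).
Proof.
  intros Hd Hx1 HG1 HG2 HK1 HK2 HI1 HI2.
  assert (Lp : exists C, lip_at0 d C (fun s => 1 / (x1 * G2 s))).
  { apply lip_at0_div; [lra | exists 0; apply lip_at0_const |].
    apply lip_pos_at0_mult; auto using lip_pos_at0_const. }
  assert (Lq1 : exists C, lip_at0 d C (fun s => K1 s / (G2 s * I1 s * x1))).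
  { apply lip_at0_div; [lra | apply HK1 |].
    repeat apply lip_pos_at0_mult; auto using lip_pos_at0_const. }
  assert (Lq2 : exists C, lip_at0 d C (fun s => G1 s * I2 s * x2 / K2 s)).
  { apply lip_at0_div; [lra | | auto].
    destruct HG1 as [[CG1 LG1] _], HI2 as [[CI2 LI2] _]. eexists.
    apply lip_at0_mult; [lra | apply lip_at0_mult; eauto | apply lip_at0_const]. }
  destruct (delta_u_split_bound _ _ _ d beta eps Hd Lp Lq1 Lq2) as [C [HC Hbound]].
  exists C. split; [exact HC |]. intros E1 E2 e1 e2 HE1 HE2 He1 He2.
  eapply Rle_trans; [right | apply (Hbound E1 E2 e1 e2); auto].
  f_equal. unfold u_pert, Rdiv. ring.
Qed.

Theorem lemma2 (A : R) (k1 k2 mu1 mu2 g1 g2 : R -> R) (z1 z2 eps beta x1 : R) :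
  0 < A ->
  cont_on_0A A k1 -> cont_on_0A A k2 ->
  cont_on_0A A mu1 -> cont_on_0A A mu2 ->
  cont_on_0A A g1 -> cont_on_0A A g2 ->
  (forall x, 0 <= x <= A -> 0 <= k1 x /\ 0 <= k2 x /\ 0 <= mu1 x /\ 0 <= mu2 x
                            /\ 0 <= g1 x /\ 0 <= g2 x) ->
  0 < RInt k1 0 A -> 0 < RInt k2 0 A ->
  0 < RInt mu1 0 A -> 0 < RInt mu2 0 A ->
  0 < RInt g1 0 A -> 0 < RInt g2 0 A ->
  0 < z1 -> RInt (fun a => k1 a * surv z1 mu1 a) 0 A = 1 ->
  0 < z2 -> RInt (fun a => k2 a * surv z2 mu2 a) 0 A = 1 ->
  0 < eps -> eps / (4 * (1 + eps)) < beta ->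
  let gam1 := Ggamma A g1 z2 mu2 in
  let gam2 := Ggamma A g2 z1 mu1 in
  1 / (z2 * gam2) < x1 ->
  let a := 1 / (x1 * gam2) in
  let b := z1 - z2 + a in
  0 < b ->
  let x2 := b / gam1 in
  let r := fun eta1 eta2 : R =>
    sqrt ((a * (1 - exp (- eta1))) ^ 2 + (b * (exp eta2 - 1)) ^ 2) in
  let Du := fun eta1 eta2 e1 e2 : R =>
    uhat A k1 k2 mu1 mu2 g1 g2 z1 z2 beta eps x1 x2 eta1 eta2 e1 e2
    - uhat A k1 k2 mu1 mu2 g1 g2 z1 z2 beta eps x1 x2 eta1 eta2 0 0 in
  forall delta : R, 0 < delta ->
  forall Rr : R, 0 < Rr -> Rr < Rmin a b ->
  exists C : R, 0 < C /\
    forall eta1 eta2 e1 e2 : R,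
      r eta1 eta2 <= Rr ->
      Rabs e1 + Rabs e2 <= delta ->
      Rabs (Du eta1 eta2 e1 e2) <= C * (Rabs e1 + Rabs e2).
Proof.
  intros HA Hk1 Hk2 Hm1 Hm2 Hg1 Hg2 Hnn Ik1 Ik2 _ _ Ig1 Ig2 _ Hn1 Hz2 Hn2 _ _
    gam1 gam2 Hx1 a b _ x2 r Du delta Hd Rr _ HRr.
  destruct (species_rate_maps A k1 mu1 g2 z1 delta) as [G2 [K1 I1]];
    [auto | auto | auto | auto | intros x Hx; split; apply Hnn; auto | auto | auto | lra |].
  destruct (species_rate_maps A k2 mu2 g1 z2 delta) as [G1 [K2 I2]];
    [auto | auto | auto | auto | intros x Hx; split; apply Hnn; auto | auto | auto | lra |].
  assert (Hx1p : 0 < x1).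
  { pose proof (lip_pos_at0_pos0 _ _ (Rlt_le _ _ Hd) G2) as Hgam2. cbv beta in Hgam2.
    rewrite Rminus_0_r in Hgam2. apply (Rlt_trans _ (1 / (z2 * gam2))); [| auto].
    apply Rdiv_lt_0_compat; [lra | apply Rmult_lt_0_compat; auto]. }
  destruct (u_pert_delta_bound _ _ _ _ _ _ z1 z2 beta eps x1 x2 delta Hd Hx1p
              G1 G2 K1 K2 I1 I2) as [C [HC Hbound]].
  exists C. split; [exact HC |]. intros eta1 eta2 e1 e2 Hr He.
  destruct (exp_lt_2_of_r_lt a b eta1 eta2) as [HE1 HE2]; [unfold r in Hr; lra |].
  pose proof (Rabs_pos e1). pose proof (Rabs_pos e2).
  apply (Hbound (exp (- eta1)) (exp eta2)); auto using exp_pos; lra.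
Qed.
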